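(* Normal form bisimilarity is included in contextual equivalence: for all terms $t_0,t_1$ of $\lambda_{\mathcal S}$, if $t_0 \sim t_1$ then $t_0 \simeq_{\mathrm{ctx}} t_1$.
   Context: The calculus $\lambda_{\mathcal S}$ (call-by-value $\lambda$-calculus with shift and reset). Terms: $t ::= x \mid \lambda x.t \mid t\,t \mid \mathcal{S}k.t \mid \langle t\rangle$; values: $v ::= \lambda x.t \mid x$. $\lambda x.t$ binds $x$ in $t$ and $\mathcal{S}k.t$ binds $k$ in $t$; terms are identified up to $\alpha$-conversion; $\mathrm{fv}(t)$ is the set of free variables; $t\{v/x\}$ is capture-avoiding substitution. Pure contexts: $F ::= [\,] \mid v\,F \mid F\,t$. Evaluation contexts: $E ::= [\,] \mid v\,E \mid E\,t \mid \langle E\rangle$. General contexts: $C ::= [\,] \mid \lambda x.C \mid t\,C \mid C\,t \mid \mathcal{S}k.C \mid \langle C\rangle$; $C[t]$ is hole-filling (free variables of $t$ may be captured). Reduction $\to$: $E[(\lambda x.t)\,v] \to E[t\{v/x\}]$; $E[\langle F[\mathcal{S}k.t]\rangle] \to E[\langle t\{\lambda x.\langle F[x]\rangle/k\}\rangle]$ with $x\notin\mathrm{fv}(F)$; $E[\langle v\rangle]\to E[v]$. $\to^*$ is the reflexive-transitive closure, and $t \Downarrow t'$ means $t\to^* t'$ and $t'$ is irreducible. A term is stuck if it is not a value and is irreducible; a normal form is a value or a stuck term. Control stuck terms are those of the form $F[\mathcal{S}k.t]$; open stuck terms are those of the form $E[x\,v]$. A variable is fresh if it does not occur free in the terms/contexts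 under consideration. Contextual equivalence: $t_0 \simeq_{\mathrm{ctx}} t_1$ iff for every context $C$ such that $C[t_0]$ and $C[t_1]$ are closed, (i) $C[t_0]\Downarrow v_0$ for a value $v_0$ implies $C[t_1]\Downarrow v_1$ for some value $v_1$; (ii) $C[t_0]\Downarrow t_0'$ with $t_0'$ control stuck implies $C[t_1]\Downarrow t_1'$ with $t_1'$ control stuck; and symmetrically with $t_0,t_1$ exchanged. Normal form bisimilarity. Given a relation $\mathcal R$ on terms, extend it to evaluation contexts: $E_0 \mathrel{\mathcal R} E_1$ iff either $E_0 = E_0'[\langle F_0\rangle]$, $E_1 = E_1'[\langle F_1\rangle]$ with $F_0,F_1$ pure, $E_0'[x]\mathrel{\mathcal R}E_1'[x]$ and $\langle F_0[x]\rangle \mathrel{\mathcal R}\langle F_1[x]\rangle$ for a fresh $x$; or $E_0=F_0$, $E_1=F_1$ are pure and $F_0[x]\mathrel{\mathcal R}F_1[x]$ for a fresh $x$. Define $v\mathbin{@}y$ as $x\,y$ if $v=x$ and as $t\{y/x\}$ if $v=\lambda x.t$. Define $\mathcal R^{\mathrm{nf}}$ on normal forms inductively: $v_0 \mathrel{\mathcal R^{\mathrm{nf}}} v_1$ if $v_0\mathbin{@}x \mathrel{\mathcal R} v_1\mathbin{@}x$ for a fresh $x$; $F_0[\mathcal{S}k.t_0] \mathrel{\mathcal R^{\mathrm{nf}}} F_1[\mathcal{S}k.t_1]$ if $F_0\mathrel{\mathcal R}F_1$ and $\langle t_0\rangle\mathrel{\mathcal R}\langle t_1\rangle$; $E_0[x\,v_0]\mathrel{\mathcal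 R^{\mathrm{nf}}}E_1[x\,v_1]$ if $E_0\mathrel{\mathcal R}E_1$ and $v_0\mathrel{\mathcal R^{\mathrm{nf}}}v_1$. $\mathcal R$ is a normal form simulation if $t_0\mathrel{\mathcal R}t_1$ and $t_0\Downarrow t_0'$ imply $t_1\Downarrow t_1'$ for some $t_1'$ with $t_0'\mathrel{\mathcal R^{\mathrm{nf}}}t_1'$; it is a normal form bisimulation if both $\mathcal R$ and its inverse are normal form simulations. Normal form bisimilarity $\sim$ is the largest normal form bisimulation. *)

(* The calculus lambda_S (CBV lambda-calculus with shift/reset)
   with terms represented by de Bruijn indices (terms up to alpha-conversion). *)
From Stdlib Require Import Relations.

Inductive term : Type :=
| Var   : nat -> term
| Lam   : term -> term
| App   : term -> term -> term
| Shift : term -> term            (* S k. t, binds index 0 (k) in t *)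
| Reset : term -> term.

Definition is_val (t : term) : Prop :=
  match t with Var _ | Lam _ => True | _ => False end.

Definition upren (xi : nat -> nat) (n : nat) : nat :=
  match n with 0 => 0 | S m => S (xi m) end.

Fixpoint ren (xi : nat -> nat) (t : term) : term :=
  match t with
  | Var n => Var (xi n)
  | Lam t => Lam (ren (upren xi) t)
  | App t u => App (ren xi t) (ren xi u)
  | Shift t => Shift (ren (upren xi) t)
  | Reset t => Reset (ren xi t)
  end.

Definition up (s : nat -> term) (n : nat) : term :=
  match n with 0 => Var 0 | S m => ren S (s m) end.

Fixpoint subst (s : nat -> term) (t : term) : term :=
  match t with
  | Var n => s n
  | Lam t => Lam (subst (up s) t)
  | App t u => App (subst s t) (subst s u)
  | Shift t => Shift (subst (up s) t)
  | Reset t => Reset (subst s t)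
  end.

(** [t{v/x}] where x is the variable bound by the enclosing binder (index 0) *)
Definition beta (v : term) (n : nat) : term :=
  match n with 0 => v | S m => Var m end.

Definition subst1 (v t : term) : term := subst (beta v) t.

Fixpoint closed_at (n : nat) (t : term) : Prop :=
  match t with
  | Var m => m < n
  | Lam t => closed_at (S n) t
  | App t u => closed_at n t /\ closed_at n u
  | Shift t => closed_at (S n) t
  | Reset t => closed_at n t
  end.

Definition closed (t : term) : Prop := closed_at 0 t.

Inductive ectx : Type :=
| EHole : ectx
| EAppR : term -> ectx -> ectx
| EAppL : ectx -> term -> ectx
| EReset : ectx -> ectx.

Fixpoint plug (E : ectx) (t : term) : term :=
  match E with
  | EHole => t
  | EAppR v E => App v (plug E t)
  | EAppL E u => App (plug E t) u
  | EReset E => Reset (plug E t)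
  end.

Fixpoint ectx_ok (E : ectx) : Prop :=
  match E with
  | EHole => True
  | EAppR v E => is_val v /\ ectx_ok E
  | EAppL E _ => ectx_ok E
  | EReset E => ectx_ok E
  end.

Fixpoint no_reset (E : ectx) : Prop :=
  match E with
  | EHole => True
  | EAppR _ E => no_reset E
  | EAppL E _ => no_reset E
  | EReset _ => False
  end.

Definition ectx_eval (E : ectx) : Prop := ectx_ok E.
Definition ectx_pure (F : ectx) : Prop := ectx_ok F /\ no_reset F.

Fixpoint ecomp (E1 E2 : ectx) : ectx :=
  match E1 with
  | EHole => E2
  | EAppR v E => EAppR v (ecomp E E2)
  | EAppL E u => EAppL (ecomp E E2) u
  | EReset E => EReset (ecomp E E2)
  end.

Fixpoint eren (xi : nat -> nat) (E : ectx) : ectx :=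
  match E with
  | EHole => EHole
  | EAppR v E => EAppR (ren xi v) (eren xi E)
  | EAppL E u => EAppL (eren xi E) (ren xi u)
  | EReset E => EReset (eren xi E)
  end.

(** [E[x]] for a fresh variable x: shift the free variables of E by one and
    use index 0 as the fresh variable. *)
Definition plug_fresh (E : ectx) : term := plug (eren S E) (Var 0).

Inductive step : term -> term -> Prop :=
| step_beta : forall E t v, ectx_eval E -> is_val v ->
    step (plug E (App (Lam t) v)) (plug E (subst1 v t))
| step_shift : forall E F t, ectx_eval E -> ectx_pure F ->
    step (plug E (Reset (plug F (Shift t))))
         (plug E (Reset (subst1 (Lam (Reset (plug_fresh F))) t)))
| step_reset : forall E v, ectx_eval E -> is_val v ->
    step (plug E (Reset v)) (plug E v).

Definition steps : term -> term -> Prop := clos_refl_trans term step.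

Definition irreducible (t : term) : Prop := forall u, ~ step t u.

Definition evals (t t' : term) : Prop := steps t t' /\ irreducible t'.

Definition stuck (t : term) : Prop := ~ is_val t /\ irreducible t.
Definition normal_form (t : term) : Prop := is_val t \/ stuck t.

Definition control_stuck (t : term) : Prop :=
  exists F s, ectx_pure F /\ t = plug F (Shift s).

Definition open_stuck (t : term) : Prop :=
  exists E x v, ectx_eval E /\ is_val v /\ t = plug E (App (Var x) v).

Inductive gctx : Type :=
| CHole : gctx
| CLam : gctx -> gctx
| CAppR : term -> gctx -> gctx
| CAppL : gctx -> term -> gctx
| CShift : gctx -> gctx
| CReset : gctx -> gctx.

(** hole filling; with de Bruijn indices, free variables of the plugged term
    are captured by the binders of the context *)
Fixpoint cplug (C : gctx) (t : term) : term :=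
  match C with
  | CHole => t
  | CLam C => Lam (cplug C t)
  | CAppR u C => App u (cplug C t)
  | CAppL C u => App (cplug C t) u
  | CShift C => Shift (cplug C t)
  | CReset C => Reset (cplug C t)
  end.

Definition ctx_approx (t0 t1 : term) : Prop :=
  forall C, closed (cplug C t0) -> closed (cplug C t1) ->
    ((exists v0, evals (cplug C t0) v0 /\ is_val v0) ->
       exists v1, evals (cplug C t1) v1 /\ is_val v1) /\
    ((exists u0, evals (cplug C t0) u0 /\ control_stuck u0) ->
       exists u1, evals (cplug C t1) u1 /\ control_stuck u1).

Definition ctx_equiv (t0 t1 : term) : Prop :=
  ctx_approx t0 t1 /\ ctx_approx t1 t0.

Definition ectx_rel (R : term -> term -> Prop) (E0 E1 : ectx) : Prop :=
  (exists E0' F0 E1' F1,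
      ectx_eval E0' /\ ectx_pure F0 /\ ectx_eval E1' /\ ectx_pure F1 /\
      E0 = ecomp E0' (EReset F0) /\ E1 = ecomp E1' (EReset F1) /\
      R (plug_fresh E0') (plug_fresh E1') /\
      R (Reset (plug_fresh F0)) (Reset (plug_fresh F1)))
  \/
  (ectx_pure E0 /\ ectx_pure E1 /\ R (plug_fresh E0) (plug_fresh E1)).

(** v @ x for a fresh x (index 0 after shifting the free variables of v) *)
Definition app_fresh (v : term) : term :=
  match v with
  | Lam t => t
  | t => App (ren S t) (Var 0)
  end.

Inductive nf_rel (R : term -> term -> Prop) : term -> term -> Prop :=
| nf_val : forall v0 v1, is_val v0 -> is_val v1 ->
    R (app_fresh v0) (app_fresh v1) -> nf_rel R v0 v1
| nf_ctrl : forall F0 F1 t0 t1, ectx_pure F0 -> ectx_pure F1 ->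
    ectx_rel R F0 F1 -> R (Reset t0) (Reset t1) ->
    nf_rel R (plug F0 (Shift t0)) (plug F1 (Shift t1))
| nf_open : forall E0 E1 x v0 v1, ectx_eval E0 -> ectx_eval E1 ->
    is_val v0 -> is_val v1 ->
    ectx_rel R E0 E1 -> nf_rel R v0 v1 ->
    nf_rel R (plug E0 (App (Var x) v0)) (plug E1 (App (Var x) v1)).

Definition nf_simulation (R : term -> term -> Prop) : Prop :=
  forall t0 t1, R t0 t1 -> forall t0', evals t0 t0' ->
    exists t1', evals t1 t1' /\ nf_rel R t0' t1'.

Definition nf_bisimulation (R : term -> term -> Prop) : Prop :=
  nf_simulation R /\ nf_simulation (fun t1 t0 => R t0 t1).

Definition nf_bisim (t0 t1 : term) : Prop :=
  exists R, nf_bisimulation R /\ R t0 t1.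

From Stdlib Require Import Lia Arith Relations Classical.

(* Contextual approximation follows from a step-indexed, biorthogonal logical
   relation: related terms are observationally related in related
   continuations, the relation is compatible with every term constructor and
   hence preserved by all contexts, and in the empty continuation it yields the
   observations of contextual equivalence (reaching a value, or a control-stuck
   term).  It then suffices to show that every normal form simulation R is
   contained in the open version of the relation.  This goes by induction on
   the step index: evaluate the left term (closed by related substitutions) to
   a normal form, follow R to a related normal form on the right, and check
   each kind of normal form -- value, control-stuck, open-stuck -- against the
   related continuations; an open-stuck term applies a related function to
   related arguments inside R-related contexts.  As R and its inverse are both
   simulations, bisimilar terms approximate each other in both directions. *)

(** * Substitution *)

Definition scons (v : term) (s : nat -> term) (n : nat) : term :=
  match n with 0 => v | S m => s m end.

Lemma ren_ext t xi zeta : (forall n, xi n = zeta n) -> ren xi t = ren zeta t.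
Proof.
  revert xi zeta; induction t; intros xi zeta H; simpl; f_equal; auto;
  apply IHt; intros [|n]; simpl; auto.
Qed.

Lemma subst_ext t s s' : (forall n, s n = s' n) -> subst s t = subst s' t.
Proof.
  revert s s'; induction t; intros s s' H; simpl; f_equal; auto;
  apply IHt; intros [|n]; simpl; rewrite ?H; auto.
Qed.

Lemma ren_ren t xi zeta : ren xi (ren zeta t) = ren (fun n => xi (zeta n)) t.
Proof.
  revert xi zeta; induction t; intros xi zeta; simpl; f_equal; auto;
  rewrite IHt; apply ren_ext; intros [|n]; reflexivity.
Qed.

Lemma ren_subst t xi s : ren xi (subst s t) = subst (fun n => ren xi (s n)) t.
Proof.
  revert xi s; induction t; intros xi s; simpl; f_equal; auto;
  rewrite IHt; apply subst_ext; intros [|n]; simpl; auto;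
  rewrite !ren_ren; apply ren_ext; reflexivity.
Qed.

Lemma subst_ren t xi s : subst s (ren xi t) = subst (fun n => s (xi n)) t.
Proof.
  revert xi s; induction t; intros xi s; simpl; f_equal; auto;
  rewrite IHt; apply subst_ext; intros [|n]; reflexivity.
Qed.

Lemma subst_subst t s1 s2 : subst s2 (subst s1 t) = subst (fun n => subst s2 (s1 n)) t.
Proof.
  revert s1 s2; induction t; intros s1 s2; simpl; f_equal; auto;
  rewrite IHt; apply subst_ext; intros [|n]; simpl; auto;
  rewrite subst_ren, ren_subst; apply subst_ext; reflexivity.
Qed.

Lemma subst_id t : subst Var t = t.
Proof.
  induction t; simpl; f_equal; auto;
  rewrite <- IHt at 2; apply subst_ext; intros [|n]; reflexivity.
Qed.

Lemma subst1_up p s t : subst1 p (subst (up s) t) = subst (scons p s) t.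
Proof.
  unfold subst1; rewrite subst_subst; apply subst_ext; intros [|n]; simpl; auto.
  rewrite subst_ren; etransitivity; [|apply subst_id]; apply subst_ext; reflexivity.
Qed.

Lemma subst_subst1 s v t : subst s (subst1 v t) = subst1 (subst s v) (subst (up s) t).
Proof.
  rewrite subst1_up; unfold subst1; rewrite subst_subst;
  apply subst_ext; intros [|n]; reflexivity.
Qed.

Fixpoint esubst (s : nat -> term) (E : ectx) : ectx :=
  match E with
  | EHole => EHole
  | EAppR v E => EAppR (subst s v) (esubst s E)
  | EAppL E u => EAppL (esubst s E) (subst s u)
  | EReset E => EReset (esubst s E)
  end.

Lemma plug_subst s E t : subst s (plug E t) = plug (esubst s E) (subst s t).
Proof. induction E; simpl; f_equal; auto. Qed.

Lemma esubst_ext E s s' : (forall n, s n = s' n) -> esubst s E = esubst s' E.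
Proof. induction E; intros; simpl; f_equal; auto; apply subst_ext; auto. Qed.

Lemma esubst_eren E s xi : esubst s (eren xi E) = esubst (fun n => s (xi n)) E.
Proof. induction E; simpl; f_equal; auto; apply subst_ren. Qed.

Lemma eren_esubst E xi s : eren xi (esubst s E) = esubst (fun n => ren xi (s n)) E.
Proof. induction E; simpl; f_equal; auto; apply ren_subst. Qed.

Lemma esubst_id E : esubst Var E = E.
Proof. induction E; simpl; f_equal; auto; apply subst_id. Qed.

Lemma plug_ecomp E1 E2 t : plug (ecomp E1 E2) t = plug E1 (plug E2 t).
Proof. induction E1; simpl; f_equal; auto. Qed.

Lemma plug_ecomp_reset N F t : plug (ecomp N (EReset F)) t = plug N (Reset (plug F t)).
Proof. apply plug_ecomp. Qed.

Lemma esubst_ecomp s E1 E2 : esubst s (ecomp E1 E2) = ecomp (esubst s E1) (esubst s E2).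
Proof. induction E1; simpl; f_equal; auto. Qed.

Lemma ecomp_assoc E1 E2 E3 : ecomp (ecomp E1 E2) E3 = ecomp E1 (ecomp E2 E3).
Proof. induction E1; simpl; f_equal; auto. Qed.

Lemma subst_up_plug_fresh s F : subst (up s) (plug_fresh F) = plug_fresh (esubst s F).
Proof.
  unfold plug_fresh; rewrite plug_subst; simpl; f_equal.
  rewrite esubst_eren, eren_esubst; apply esubst_ext; reflexivity.
Qed.

Lemma subst_scons_plug_fresh v s F : subst (scons v s) (plug_fresh F) = plug (esubst s F) v.
Proof.
  unfold plug_fresh; rewrite plug_subst; simpl; f_equal.
  rewrite esubst_eren; apply esubst_ext; reflexivity.
Qed.

Lemma subst1_reset_plug_fresh v F : subst1 v (Reset (plug_fresh F)) = Reset (plug F v).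
Proof.
  unfold subst1; change (beta v) with (scons v Var); simpl.
  rewrite subst_scons_plug_fresh, esubst_id; reflexivity.
Qed.

Definition vsubst (s : nat -> term) : Prop := forall n, is_val (s n).

Lemma vsubst_scons v s : is_val v -> vsubst s -> vsubst (scons v s).
Proof. intros Hv Hs [|n]; simpl; auto. Qed.

Lemma is_val_subst s v : vsubst s -> is_val v -> is_val (subst s v).
Proof. destruct v; simpl; auto; contradiction. Qed.

Lemma ectx_ok_esubst s E : vsubst s -> ectx_ok E -> ectx_ok (esubst s E).
Proof. induction E; simpl; intuition; apply is_val_subst; auto. Qed.

Lemma ectx_pure_esubst s F : vsubst s -> ectx_pure F -> ectx_pure (esubst s F).
Proof.
  intros Hs [Hok Hnr]; split; [apply ectx_ok_esubst; auto|].
  clear Hok; induction F; simpl in *; auto.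
Qed.

Lemma ectx_ok_ecomp E1 E2 : ectx_ok E1 -> ectx_ok E2 -> ectx_ok (ecomp E1 E2).
Proof. induction E1; simpl; intuition. Qed.

Lemma ectx_pure_ecomp F1 F2 : ectx_pure F1 -> ectx_pure F2 -> ectx_pure (ecomp F1 F2).
Proof.
  intros [Hok1 Hnr1] [Hok2 Hnr2]; split; [apply ectx_ok_ecomp; auto|].
  clear Hok1; induction F1; simpl in *; auto.
Qed.

Lemma ecomp_reset_not_pure E F : ~ ectx_pure (ecomp E (EReset F)).
Proof. intros [_ H]; induction E; simpl in *; auto. Qed.

(** * Reduction *)

(* A syntax-directed presentation of [step]: congruence rules replace the
   decomposition into an evaluation context, which makes the relation easy to
   invert and to push through substitutions. *)
Inductive sstep : term -> term -> Prop :=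
| ss_beta t v : is_val v -> sstep (App (Lam t) v) (subst1 v t)
| ss_shift F t : ectx_pure F ->
    sstep (Reset (plug F (Shift t))) (Reset (subst1 (Lam (Reset (plug_fresh F))) t))
| ss_reset v : is_val v -> sstep (Reset v) v
| ss_appL t t' u : sstep t t' -> sstep (App t u) (App t' u)
| ss_appR v t t' : is_val v -> sstep t t' -> sstep (App v t) (App v t')
| ss_resetc t t' : sstep t t' -> sstep (Reset t) (Reset t').

Lemma sstep_plug E t t' : ectx_ok E -> sstep t t' -> sstep (plug E t) (plug E t').
Proof.
  induction E; simpl; intros HE H; intuition.
  - apply ss_appR; auto.
  - apply ss_appL; auto.
  - apply ss_resetc; auto.
Qed.

Lemma step_plug E t t' : ectx_ok E -> step t t' -> step (plug E t) (plug E t').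
Proof.
  intros HE H; destruct H as [E' t v HE' Hv | E' F t HE' HF | E' v HE' Hv];
  rewrite <- !plug_ecomp; constructor; auto; apply ectx_ok_ecomp; auto.
Qed.

Lemma step_iff_sstep t u : step t u <-> sstep t u.
Proof.
  split; intro H.
  - destruct H; apply sstep_plug; auto; constructor; auto.
  - induction H.
    + exact (step_beta EHole t v I H).
    + exact (step_shift EHole F t I H).
    + exact (step_reset EHole v I H).
    + exact (step_plug (EAppL EHole u) _ _ I IHsstep).
    + exact (step_plug (EAppR v EHole) _ _ (conj H I) IHsstep).
    + exact (step_plug (EReset EHole) _ _ I IHsstep).
Qed.

Lemma irreducible_sstep t : irreducible t <-> forall u, ~ sstep t u.
Proof.
  unfold irreducible; split; intros H u Hu; apply (H u), step_iff_sstep; auto.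
Qed.

Ltac split_ands := repeat match goal with H : _ /\ _ |- _ => destruct H end.

Lemma plug_shift_not_val F t : ~ is_val (plug F (Shift t)).
Proof. destruct F; simpl; auto. Qed.

Lemma plug_app_not_val E a b : ~ is_val (plug E (App a b)).
Proof. destruct E; simpl; auto. Qed.

Lemma plug_shift_not_var F t n : plug F (Shift t) <> Var n.
Proof. destruct F; discriminate. Qed.

Lemma plug_app_not_var E a b n : plug E (App a b) <> Var n.
Proof. destruct E; discriminate. Qed.

Lemma val_irreducible v : is_val v -> forall u, ~ sstep v u.
Proof. intros Hv u H; destruct v; simpl in Hv; try contradiction; inversion H. Qed.

Lemma pure_shift_irreducible F t : ectx_pure F -> forall u, ~ sstep (plug F (Shift t)) u.
Proof.
  intros [Hok Hnr]; induction F; simpl in *; intros u H; try contradiction;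
  inversion H; subst; split_ands;
  try solve [eapply plug_shift_not_val; eauto | eapply val_irreducible; eauto
            | eapply IHF; eauto | destruct F; discriminate].
Qed.

Lemma plug_shift_inj F F' t t' : ectx_pure F -> ectx_pure F' ->
  plug F (Shift t) = plug F' (Shift t') -> F = F' /\ t = t'.
Proof.
  unfold ectx_pure; revert F' t t'; induction F; intros F' a a' HF HF' Heq; destruct F';
    simpl in *; try discriminate; try contradiction;
  injection Heq; intros; subst; split_ands; auto;
  try (exfalso; eapply plug_shift_not_val; eassumption);
  try (destruct (IHF F' a a'); intuition; subst; auto; fail).
Qed.

Lemma sstep_deterministic t u u' : sstep t u -> sstep t u' -> u = u'.
Proof.
  intros H; revert u'; induction H; intros u' H'; inversion H'; subst; auto;
  try (exfalso; eapply val_irreducible; [|eassumption]; simpl; auto; fail);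
  try (exfalso; eapply val_irreducible; eassumption);
  try (exfalso; eapply pure_shift_irreducible; eassumption);
  try (exfalso; eapply plug_shift_not_val; eassumption);
  try (f_equal; auto; fail).
  - destruct (plug_shift_inj F0 F t0 t); subst; auto.
  - match goal with Hs : sstep (Lam _) _ |- _ => inversion Hs end.
Qed.

Lemma sstep_subst s t u : vsubst s -> sstep t u -> sstep (subst s t) (subst s u).
Proof.
  intros Hs H; induction H; simpl.
  - rewrite subst_subst1; apply ss_beta, is_val_subst; auto.
  - rewrite plug_subst, subst_subst1; simpl; rewrite subst_up_plug_fresh.
    apply ss_shift, ectx_pure_esubst; auto.
  - apply ss_reset, is_val_subst; auto.
  - apply ss_appL; auto.
  - apply ss_appR; auto; apply is_val_subst; auto.
  - apply ss_resetc; auto.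
Qed.

Lemma open_ne_pure_shift E x v F s : ectx_ok E -> is_val v -> ectx_pure F ->
  plug E (App (Var x) v) <> plug F (Shift s).
Proof.
  unfold ectx_pure; revert x v F s; induction E; intros x v0 F s0 HE Hv [HF HF'] Heq;
    destruct F; simpl in *; try discriminate; try contradiction;
    injection Heq; intros; subst; split_ands;
  try (match goal with H : plug E _ = plug _ _ |- _ =>
         refine (IHE _ _ _ _ _ _ _ H); [assumption | assumption | split; assumption] end);
  try solve [eapply plug_shift_not_val; eauto | eapply plug_app_not_val; eauto];
  try (match goal with H : Var _ = plug _ (Shift _) |- _ =>
         symmetry in H; exact (plug_shift_not_var _ _ _ H) end).
Qed.

Lemma open_irreducible E x v : ectx_ok E -> is_val v ->
  forall u, ~ sstep (plug E (App (Var x) v)) u.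
Proof.
  revert x v; induction E; intros x v0 HE Hv u Hs; simpl in *; split_ands;
  inversion Hs; subst;
  try (match goal with H : sstep ?a _, H' : is_val ?a |- _ => exact (val_irreducible _ H' _ H) end);
  try solve [eapply plug_app_not_val; eauto];
  try (match goal with H : sstep (Var _) _ |- _ => inversion H end);
  try (match goal with H : sstep (plug E _) _ |- _ => refine (IHE _ _ _ Hv _ H); assumption end);
  try (match goal with H : Lam _ = plug E _ |- _ => destruct E; discriminate end);
  try (match goal with H : plug E _ = plug _ _ |- _ =>
         eapply open_ne_pure_shift; [ | | | exact H]; eauto end);
  try (match goal with H : plug _ _ = plug E _ |- _ =>
         symmetry in H; eapply open_ne_pure_shift; [ | | | exact H]; eauto end).
Qed.

Lemma control_stuck_irreducible t : control_stuck t -> irreducible t.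
Proof.
  intros [F [s [HF ->]]]; apply irreducible_sstep, pure_shift_irreducible; auto.
Qed.

Lemma control_stuck_not_val t : control_stuck t -> ~ is_val t.
Proof. intros [F [s [_ ->]]]; apply plug_shift_not_val. Qed.

Lemma open_not_control_stuck E x v : ectx_ok E -> is_val v ->
  ~ control_stuck (plug E (App (Var x) v)).
Proof. intros HE Hv [F [s [HF Heq]]]; eapply open_ne_pure_shift; eauto. Qed.

(** * Step-indexed observations *)

Inductive nsteps : nat -> term -> term -> Prop :=
| nsteps_refl t : nsteps 0 t t
| nsteps_cons n t u w : sstep t u -> nsteps n u w -> nsteps (S n) t w.

Lemma nsteps_one t u : sstep t u -> nsteps 1 t u.
Proof. intros; econstructor; eauto; constructor. Qed.

Lemma nsteps_plug E n t u : ectx_ok E -> nsteps n t u -> nsteps n (plug E t) (plug E u).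
Proof. induction 2; econstructor; eauto using sstep_plug. Qed.

Lemma nsteps_subst s n t u : vsubst s -> nsteps n t u -> nsteps n (subst s t) (subst s u).
Proof. induction 2; econstructor; eauto using sstep_subst. Qed.

Lemma steps_iff_nsteps t u : steps t u <-> exists n, nsteps n t u.
Proof.
  split.
  - intro H; apply clos_rt_rt1n in H; induction H as [|t u w Htu _ [n Hn]].
    + exists 0; constructor.
    + exists (S n); econstructor; eauto; apply step_iff_sstep; auto.
  - intros [n H]; induction H; [apply rt_refl|].
    eapply rt_trans; eauto; apply rt_step, step_iff_sstep; auto.
Qed.

Lemma nsteps_steps n t u : nsteps n t u -> steps t u.
Proof. intro; apply steps_iff_nsteps; eauto. Qed.

Lemma nsteps_prefix m t w n v : nsteps m t w -> nsteps n t v -> irreducible v ->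
  m <= n /\ nsteps (n - m) w v.
Proof.
  intros Hm; revert n; induction Hm as [t|m t u w Htu _ IH]; intros n Hn Hv.
  - rewrite Nat.sub_0_r; split; [lia | auto].
  - inversion Hn as [|n' t' u' v' Htu' Hn']; subst.
    + exfalso; exact (proj1 (irreducible_sstep _) Hv _ Htu).
    + rewrite (sstep_deterministic _ _ _ Htu Htu') in IH.
      destruct (IH _ Hn' Hv); split; [lia | auto].
Qed.

Definition observable (t : term) : Prop := is_val t \/ control_stuck t.

Lemma observable_irreducible t : observable t -> irreducible t.
Proof.
  intros [Hv | Hc]; [|apply control_stuck_irreducible; auto].
  apply irreducible_sstep, val_irreducible; auto.
Qed.

Definition obs (k : nat) (t0 t1 : term) : Prop :=
  forall i n0, i <= k -> nsteps i t0 n0 -> observable n0 ->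
  exists n1, evals t1 n1 /\ (is_val n0 -> is_val n1) /\ (control_stuck n0 -> control_stuck n1).

Lemma obs_mono k j t0 t1 : j <= k -> obs k t0 t1 -> obs j t0 t1.
Proof. intros Hj H i n0 Hi; apply H; lia. Qed.

Lemma obs_nsteps_l m t0 t0' t1 j : nsteps m t0 t0' ->
  (m <= j -> obs (j - m) t0' t1) -> obs j t0 t1.
Proof.
  intros Hm H i n0 Hi Hs Hn0.
  destruct (nsteps_prefix _ _ _ _ _ Hm Hs (observable_irreducible _ Hn0)) as [Hmi Hs'].
  apply (H ltac:(lia) (i - m)); auto; lia.
Qed.

Lemma obs_sstep_l t0 t0' t1 j : sstep t0 t0' ->
  (forall j', j = S j' -> obs j' t0' t1) -> obs j t0 t1.
Proof.
  intros Hs H; apply (obs_nsteps_l 1 _ t0'); [apply nsteps_one; auto|].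
  intros; destruct j as [|j]; [lia|]; apply H; f_equal; lia.
Qed.

Lemma obs_nsteps_r m t0 t1 t1' k : nsteps m t1 t1' -> obs k t0 t1' -> obs k t0 t1.
Proof.
  intros Hm H i n0 Hi Hs Hn0; destruct (H i n0 Hi Hs Hn0) as [n1 [[Hs1 Hirr] Hn1]].
  exists n1; split; auto; split; auto.
  eapply rt_trans; [eapply nsteps_steps|]; eauto.
Qed.

Lemma obs_unobservable k t0 t1 : irreducible t0 -> ~ observable t0 -> obs k t0 t1.
Proof.
  intros Hirr Hno i n0 Hi Hs Hn0; inversion Hs; subst; [contradiction|].
  exfalso; eapply (proj1 (irreducible_sstep _) Hirr); eauto.
Qed.

Lemma obs_observable k t0 t1 : irreducible t0 -> irreducible t1 ->
  (is_val t0 -> is_val t1) -> (control_stuck t0 -> control_stuck t1) -> obs k t0 t1.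
Proof.
  intros Hirr0 Hirr1 Hv Hc i n0 Hi Hs Hn0; inversion Hs; subst.
  - exists t1; repeat split; auto; apply rt_refl.
  - exfalso; eapply (proj1 (irreducible_sstep _) Hirr0); eauto.
Qed.

Lemma obs_val k v0 v1 : is_val v0 -> is_val v1 -> obs k v0 v1.
Proof.
  intros H0 H1; apply obs_observable; try (apply observable_irreducible; left); auto.
  intros Hc; exfalso; exact (control_stuck_not_val _ Hc H0).
Qed.

Lemma obs_control_stuck k q0 q1 : control_stuck q0 -> control_stuck q1 -> obs k q0 q1.
Proof.
  intros H0 H1; apply obs_observable; try (apply observable_irreducible; right); auto.
  intros Hv; exfalso; exact (control_stuck_not_val _ H0 Hv).
Qed.

Lemma obs_open k E x v t1 : ectx_ok E -> is_val v -> obs k (plug E (App (Var x) v)) t1.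
Proof.
  intros HE Hv; apply obs_unobservable.
  - apply irreducible_sstep, open_irreducible; auto.
  - intros [H | H]; [eapply plug_app_not_val | eapply open_not_control_stuck]; eauto.
Qed.

(** * The logical relation *)

(* Terms are compared in related continuations of two shapes: a pure context
   F, which is all that a control-stuck term can capture, or an evaluation
   context N[<F[ ]>] made of a context N and a delimited pure context F.
   [Rgen] relates terms that cannot capture anything, such as values and
   reset-headed terms, which evaluation contexts alone suffice to test. *)
Section Relations.
Variable W : nat -> term -> term -> Prop.

Definition Kgen (j : nat) (N0 N1 : ectx) : Prop :=
  ectx_ok N0 /\ ectx_ok N1 /\
  forall i w0 w1, i <= j -> W i w0 w1 -> obs i (plug N0 w0) (plug N1 w1).

Definition Fgen (j : nat) (F0 F1 : ectx) : Prop :=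
  ectx_pure F0 /\ ectx_pure F1 /\
  forall i w0 w1, i <= j -> W i w0 w1 -> obs i (plug F0 w0) (plug F1 w1).

Definition Rgen (j : nat) (X0 X1 : term) : Prop :=
  forall i N0 N1, i <= j -> Kgen i N0 N1 -> obs i (plug N0 X0) (plug N1 X1).

Definition Pgen (j : nat) (F0 F1 : ectx) : Prop :=
  ectx_pure F0 /\ ectx_pure F1 /\
  forall i w0 w1, i <= j -> W i w0 w1 -> Rgen i (Reset (plug F0 w0)) (Reset (plug F1 w1)).

Definition Egen (k : nat) (t0 t1 : term) : Prop :=
  forall j, j <= k ->
  (forall F0 F1, Fgen j F0 F1 -> obs j (plug F0 t0) (plug F1 t1)) /\
  (forall N0 N1 F0 F1, Kgen j N0 N1 -> Pgen j F0 F1 ->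
     obs j (plug N0 (Reset (plug F0 t0))) (plug N1 (Reset (plug F1 t1)))).

(* A beta-redex on the left is contracted in advance, which pays for the
   strict decrease of the step index in [Vgen]. *)
Definition reduct (v p : term) : term :=
  match v with Lam t => subst1 p t | _ => App v p end.

Definition Vgen (k : nat) (v0 v1 : term) : Prop :=
  is_val v0 /\ is_val v1 /\
  forall j p0 p1, j < k -> W j p0 p1 -> Egen j (reduct v0 p0) (App v1 p1).

End Relations.

Definition agree (W W' : nat -> term -> term -> Prop) (k : nat) : Prop :=
  forall i a b, i <= k -> (W i a b <-> W' i a b).

Lemma agree_sym_le W W' k j : agree W W' k -> j <= k -> agree W' W j.
Proof. intros H Hj i a b Hi; symmetry; apply H; lia. Qed.

Lemma Kgen_agree W W' k N0 N1 : agree W W' k -> Kgen W k N0 N1 -> Kgen W' k N0 N1.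
Proof.
  intros Ha [H0 [H1 H]]; split; auto; split; auto.
  intros i w0 w1 Hi Hw; apply H, Ha; auto.
Qed.

Lemma Fgen_agree W W' k F0 F1 : agree W W' k -> Fgen W k F0 F1 -> Fgen W' k F0 F1.
Proof.
  intros Ha [H0 [H1 H]]; split; auto; split; auto.
  intros i w0 w1 Hi Hw; apply H, Ha; auto.
Qed.

Lemma Rgen_agree W W' k X0 X1 : agree W W' k -> Rgen W k X0 X1 -> Rgen W' k X0 X1.
Proof.
  intros Ha H i N0 N1 Hi HN; apply H, (Kgen_agree W'); auto.
  apply (agree_sym_le _ _ k); auto.
Qed.

Lemma Pgen_agree W W' k F0 F1 : agree W W' k -> Pgen W k F0 F1 -> Pgen W' k F0 F1.
Proof.
  intros Ha [H0 [H1 H]]; split; auto; split; auto.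
  intros i w0 w1 Hi Hw; apply (Rgen_agree W).
  - intros i' a b Hi'; apply Ha; lia.
  - apply H, Ha; auto.
Qed.

Lemma Egen_agree W W' k t0 t1 : agree W W' k -> Egen W k t0 t1 -> Egen W' k t0 t1.
Proof.
  intros Ha H j Hj; destruct (H j Hj) as [HF HK];
  assert (Ha' : agree W' W j) by (apply (agree_sym_le _ _ k); auto); split.
  - intros F0 F1 HF'; apply HF, (Fgen_agree W'); auto.
  - intros N0 N1 F0 F1 HN HP; apply HK; [apply (Kgen_agree W') | apply (Pgen_agree W')]; auto.
Qed.

(* For [j <= k], [Vup k j] is the value relation at index [j]; the recursion
   on the bound [k] makes the definition of [Vgen] well founded. *)
Fixpoint Vup (k : nat) : nat -> term -> term -> Prop :=
  match k with
  | 0 => fun _ => Vgen (fun _ _ _ => False) 0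
  | S k' => fun j => if Nat.leb j k' then Vup k' j else Vgen (Vup k') (S k')
  end.

Definition Vrel (j : nat) : term -> term -> Prop := Vup j j.

Notation Krel := (Kgen Vrel).
Notation Frel := (Fgen Vrel).
Notation Rrel := (Rgen Vrel).
Notation Prel := (Pgen Vrel).
Notation Erel := (Egen Vrel).

Lemma Vup_Vrel k j a b : j <= k -> (Vup k j a b <-> Vrel j a b).
Proof.
  revert j; induction k as [|k IH]; intros j Hj.
  - replace j with 0 by lia; reflexivity.
  - simpl; destruct (Nat.leb j k) eqn:Hjk.
    + apply Nat.leb_le in Hjk; apply IH; auto.
    + apply Nat.leb_gt in Hjk; replace j with (S k) by lia.
      unfold Vrel; cbn [Vup]; rewrite (proj2 (Nat.leb_gt (S k) k) (Nat.lt_succ_diag_r k)).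
      reflexivity.
Qed.

Lemma Vgen_agree W W' k v0 v1 : (forall j, j < k -> agree W W' j) ->
  Vgen W k v0 v1 -> Vgen W' k v0 v1.
Proof.
  intros Ha [H0 [H1 H]]; split; auto; split; auto.
  intros j p0 p1 Hj Hp; apply (Egen_agree W); auto.
  apply H; auto; apply (Ha j Hj); auto.
Qed.

Lemma Vrel_unfold k v0 v1 : Vrel k v0 v1 <-> Vgen Vrel k v0 v1.
Proof.
  destruct k as [|k].
  - split; apply Vgen_agree; intros; lia.
  - unfold Vrel at 1; cbn [Vup]; rewrite (proj2 (Nat.leb_gt (S k) k) (Nat.lt_succ_diag_r k)).
    split; apply Vgen_agree; intros j Hj i a b Hi; rewrite Vup_Vrel by lia; reflexivity.
Qed.

Lemma Vrel_val k v0 v1 : Vrel k v0 v1 -> is_val v0 /\ is_val v1.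
Proof. intros H; apply Vrel_unfold in H; destruct H as [? [? _]]; auto. Qed.

Lemma Vrel_mono k j v0 v1 : j <= k -> Vrel k v0 v1 -> Vrel j v0 v1.
Proof.
  intros Hj H; apply Vrel_unfold in H; apply Vrel_unfold.
  destruct H as [H0 [H1 H]]; split; auto; split; auto.
  intros; apply H; auto; lia.
Qed.

Lemma Krel_mono k j N0 N1 : j <= k -> Krel k N0 N1 -> Krel j N0 N1.
Proof. intros Hj [H0 [H1 H]]; split; auto; split; auto; intros; apply H; auto; lia. Qed.

Lemma Frel_mono k j F0 F1 : j <= k -> Frel k F0 F1 -> Frel j F0 F1.
Proof. intros Hj [H0 [H1 H]]; split; auto; split; auto; intros; apply H; auto; lia. Qed.

Lemma Prel_mono k j F0 F1 : j <= k -> Prel k F0 F1 -> Prel j F0 F1.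
Proof. intros Hj [H0 [H1 H]]; split; auto; split; auto; intros; apply H; auto; lia. Qed.

Lemma Frel_Krel k F0 F1 : Frel k F0 F1 -> Krel k F0 F1.
Proof. intros [[H0 _] [[H1 _] H]]; split; auto. Qed.

Lemma Erel_nsteps_r k m t0 t1 t1' : nsteps m t1 t1' -> Erel k t0 t1' -> Erel k t0 t1.
Proof.
  intros Hs H j Hj; destruct (H j Hj) as [HF HK]; split.
  - intros F0 F1 HF'; apply (obs_nsteps_r m _ _ (plug F1 t1')); [|auto].
    destruct HF' as [_ [[? _] _]]; apply nsteps_plug; auto.
  - intros N0 N1 F0 F1 HN HP; apply (obs_nsteps_r m _ _ (plug N1 (Reset (plug F1 t1')))); [|auto].
    destruct HN as [_ [? _]], HP as [_ [[? _] _]].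
    apply nsteps_plug; auto; apply (nsteps_plug (EReset F1)); auto.
Qed.

Lemma Vrel_Erel k v0 v1 : Vrel k v0 v1 -> Erel k v0 v1.
Proof.
  intros HV j Hj; apply (Vrel_mono _ j) in HV; auto; split.
  - intros F0 F1 [_ [_ H]]; apply H; auto.
  - intros N0 N1 F0 F1 HN [_ [_ H]]; apply (H j); auto.
Qed.

Lemma Frel_hole k : Frel k EHole EHole.
Proof.
  repeat split; simpl; auto.
  intros i w0 w1 _ Hw; destruct (Vrel_val _ _ _ Hw); apply obs_val; auto.
Qed.

Lemma Prel_hole k : Prel k EHole EHole.
Proof.
  repeat split; simpl; auto.
  intros i w0 w1 Hi Hw j N0 N1 Hj [HN0 [HN1 HN]]; destruct (Vrel_val _ _ _ Hw) as [Hw0 Hw1].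
  apply (obs_sstep_l _ (plug N0 w0)); [apply sstep_plug, ss_reset; auto|].
  intros j' ->; apply (obs_nsteps_r 1 _ _ (plug N1 w1)).
  - apply nsteps_one, sstep_plug, ss_reset; auto.
  - apply HN; auto; apply (Vrel_mono i); auto; lia.
Qed.

Lemma Krel_ecomp_reset k N0 N1 F0 F1 : Krel k N0 N1 -> Prel k F0 F1 ->
  Krel k (ecomp N0 (EReset F0)) (ecomp N1 (EReset F1)).
Proof.
  intros [HN0 [HN1 HN]] [[HF0 _] [[HF1 _] HP]].
  split; [apply ectx_ok_ecomp; simpl; auto|]; split; [apply ectx_ok_ecomp; simpl; auto|].
  intros i w0 w1 Hi Hw; rewrite !plug_ecomp; simpl.
  apply (HP i w0 w1 Hi Hw i); [lia|]; split; auto; split; auto.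
  intros; apply HN; auto; lia.
Qed.

Lemma Rrel_Erel k X0 X1 : Rrel k X0 X1 -> Erel k X0 X1.
Proof.
  intros H j Hj; split.
  - intros F0 F1 HF; apply H, Frel_Krel; auto.
  - intros N0 N1 F0 F1 HN HP.
    rewrite <- !plug_ecomp_reset; apply H, Krel_ecomp_reset; auto.
Qed.

(** * Compatibility *)

Notation captured F := (Lam (Reset (plug_fresh F))).

Definition Srel (k : nat) (s0 s1 : nat -> term) : Prop := forall n, Vrel k (s0 n) (s1 n).

Lemma Srel_mono k j s0 s1 : j <= k -> Srel k s0 s1 -> Srel j s0 s1.
Proof. intros Hj H n; apply (Vrel_mono k); auto. Qed.

Lemma Srel_vsubst k s0 s1 : Srel k s0 s1 -> vsubst s0 /\ vsubst s1.
Proof. intros H; split; intro n; apply (Vrel_val _ _ _ (H n)). Qed.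

Lemma Srel_scons k v0 v1 s0 s1 : Vrel k v0 v1 -> Srel k s0 s1 ->
  Srel k (scons v0 s0) (scons v1 s1).
Proof. intros Hv Hs [|n]; simpl; auto. Qed.

Definition Orel (t0 t1 : term) : Prop :=
  forall k s0 s1, Srel k s0 s1 -> Erel k (subst s0 t0) (subst s1 t1).

Lemma Orel_var n : Orel (Var n) (Var n).
Proof. intros k s0 s1 H; apply Vrel_Erel, H. Qed.

Lemma Orel_lam c0 c1 : Orel c0 c1 -> Orel (Lam c0) (Lam c1).
Proof.
  intros H k s0 s1 Hs; apply Vrel_Erel, Vrel_unfold; split; [simpl; auto|]; split; [simpl; auto|].
  intros j p0 p1 Hj Hp.
  apply (Erel_nsteps_r _ 1 _ _ (subst1 p1 (subst (up s1) c1))).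
  - apply nsteps_one, ss_beta, (Vrel_val _ _ _ Hp).
  - simpl; rewrite !subst1_up; apply H, Srel_scons; auto; apply (Srel_mono k); auto; lia.
Qed.

Lemma obs_app_pure i F0 F1 w0 w1 p0 p1 : Frel i F0 F1 -> Vrel i w0 w1 -> Vrel i p0 p1 ->
  obs i (plug F0 (App w0 p0)) (plug F1 (App w1 p1)).
Proof.
  intros HF Hw Hp; destruct (Vrel_val _ _ _ Hw) as [Hw0 _], (Vrel_val _ _ _ Hp) as [Hp0 _].
  destruct HF as [[HF0 HF0'] [[HF1 HF1'] HF]].
  destruct w0; simpl in Hw0; try contradiction; [apply obs_open; auto|].
  apply (obs_sstep_l _ (plug F0 (subst1 p0 w0))); [apply sstep_plug, ss_beta; auto|].
  intros j ->; apply Vrel_unfold in Hw; destruct Hw as [_ [_ Hw]].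
  apply (Hw j p0 p1 ltac:(lia) ltac:(apply (Vrel_mono (S j)); auto) j (le_n j)).
  split; [split; auto|]; split; [split; auto|].
  intros; apply HF; auto; lia.
Qed.

Lemma obs_app_delim i N0 N1 F0 F1 w0 w1 p0 p1 : Krel i N0 N1 -> Prel i F0 F1 ->
  Vrel i w0 w1 -> Vrel i p0 p1 ->
  obs i (plug N0 (Reset (plug F0 (App w0 p0)))) (plug N1 (Reset (plug F1 (App w1 p1)))).
Proof.
  intros HN HP Hw Hp; destruct (Vrel_val _ _ _ Hw) as [Hw0 _], (Vrel_val _ _ _ Hp) as [Hp0 _].
  pose proof HP as [[HF0 _] [[HF1 _] _]]; pose proof HN as [HN0 [HN1 _]].
  destruct w0; simpl in Hw0; try contradiction.
  - rewrite <- plug_ecomp_reset; apply obs_open; auto.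
    apply ectx_ok_ecomp; auto.
  - apply (obs_sstep_l _ (plug N0 (Reset (plug F0 (subst1 p0 w0))))).
    { apply sstep_plug, ss_resetc, sstep_plug, ss_beta; auto. }
    intros j ->; apply Vrel_unfold in Hw; destruct Hw as [_ [_ Hw]].
    apply (Hw j p0 p1 ltac:(lia) ltac:(apply (Vrel_mono (S j)); auto) j (le_n j)).
    + apply (Krel_mono (S j)); auto.
    + apply (Prel_mono (S j)); auto.
Qed.

Lemma ectx_pure_appL F b : ectx_pure F -> ectx_pure (ecomp F (EAppL EHole b)).
Proof. intros; apply ectx_pure_ecomp; [|split]; simpl; auto. Qed.

Lemma ectx_pure_appR F w : ectx_pure F -> is_val w -> ectx_pure (ecomp F (EAppR w EHole)).
Proof. intros; apply ectx_pure_ecomp; [|split]; simpl; auto. Qed.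

Lemma plug_ecomp_appL F a b : plug (ecomp F (EAppL EHole b)) a = plug F (App a b).
Proof. apply plug_ecomp. Qed.

Lemma plug_ecomp_appR F a b : plug (ecomp F (EAppR a EHole)) b = plug F (App a b).
Proof. apply plug_ecomp. Qed.

(* [App a b] is tested by testing [a] in [F[[ ] b]], then [b] in [F[w [ ]]]. *)
Lemma Erel_app k a0 a1 b0 b1 : Erel k a0 a1 -> Erel k b0 b1 -> Erel k (App a0 b0) (App a1 b1).
Proof.
  intros Ha Hb j Hj; split.
  - intros F0 F1 [HF0 [HF1 HF]]; rewrite <- !plug_ecomp_appL.
    apply (Ha j Hj); split; [apply ectx_pure_appL; auto|]; split; [apply ectx_pure_appL; auto|].
    intros i w0 w1 Hi Hw; destruct (Vrel_val _ _ _ Hw) as [Hw0 Hw1].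
    rewrite !plug_ecomp_appL, <- !plug_ecomp_appR.
    apply (Hb i ltac:(lia)); split; [apply ectx_pure_appR; auto|]; split; [apply ectx_pure_appR; auto|].
    intros i' p0 p1 Hi' Hp; rewrite !plug_ecomp_appR; apply obs_app_pure.
    + split; auto; split; auto; intros; apply HF; auto; lia.
    + apply (Vrel_mono i); auto.
    + auto.
  - intros N0 N1 F0 F1 HN [HF0 [HF1 HP]]; rewrite <- !plug_ecomp_appL.
    apply (Ha j Hj); auto; split; [apply ectx_pure_appL; auto|]; split; [apply ectx_pure_appL; auto|].
    intros i w0 w1 Hi Hw i' N0' N1' Hi' HN'; destruct (Vrel_val _ _ _ Hw) as [Hw0 Hw1].
    rewrite !plug_ecomp_appL, <- !plug_ecomp_appR.
    apply (Hb i' ltac:(lia)); auto.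
    split; [apply ectx_pure_appR; auto|]; split; [apply ectx_pure_appR; auto|].
    intros i'' p0 p1 Hi'' Hp m N0'' N1'' Hm HN''; rewrite !plug_ecomp_appR; apply obs_app_delim; auto.
    + split; auto; split; auto; intros; apply HP; auto; lia.
    + apply (Vrel_mono i); auto; lia.
    + apply (Vrel_mono i''); auto.
Qed.

Lemma Orel_app a0 a1 b0 b1 : Orel a0 a1 -> Orel b0 b1 -> Orel (App a0 b0) (App a1 b1).
Proof. intros Ha Hb k s0 s1 Hs; apply Erel_app; auto. Qed.

Lemma Erel_reset k t0 t1 : Erel k t0 t1 -> Erel k (Reset t0) (Reset t1).
Proof.
  intros H; apply Rrel_Erel; intros j N0 N1 Hj HN.
  apply (proj2 (H j Hj) N0 N1 EHole EHole HN (Prel_hole j)).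
Qed.

Lemma Orel_reset t0 t1 : Orel t0 t1 -> Orel (Reset t0) (Reset t1).
Proof. intros H k s0 s1 Hs; apply Erel_reset; auto. Qed.

Lemma Vrel_captured k F0 F1 : Prel k F0 F1 -> Vrel k (captured F0) (captured F1).
Proof.
  intros HP; apply Vrel_unfold; split; [simpl; auto|]; split; [simpl; auto|].
  intros j p0 p1 Hj Hp; destruct (Vrel_val _ _ _ Hp) as [Hp0 Hp1]; simpl.
  rewrite subst1_reset_plug_fresh.
  apply (Erel_nsteps_r _ 1 _ _ (Reset (plug F1 p1))).
  - rewrite <- subst1_reset_plug_fresh; apply nsteps_one, ss_beta; auto.
  - apply Rrel_Erel; destruct HP as [_ [_ HP]]; apply HP; auto; lia.
Qed.

Lemma Orel_shift c0 c1 : Orel c0 c1 -> Orel (Shift c0) (Shift c1).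
Proof.
  intros H k s0 s1 Hs j Hj; simpl; split.
  - intros F0 F1 [HF0 [HF1 _]].
    apply obs_control_stuck; [exists F0, (subst (up s0) c0) | exists F1, (subst (up s1) c1)]; auto.
  - intros N0 N1 F0 F1 HN HP.
    pose proof HP as [HF0 [HF1 _]]; pose proof HN as [HN0 [HN1 _]].
    apply obs_sstep_l with (1 := sstep_plug _ _ _ HN0 (ss_shift _ _ HF0)).
    intros j' ->.
    eapply obs_nsteps_r; [apply nsteps_one, sstep_plug, ss_shift; auto|].
    rewrite !subst1_up.
    assert (HE : Erel j' (subst (scons (captured F0) s0) c0) (subst (scons (captured F1) s1) c1)).
    { apply H, Srel_scons.
      - apply Vrel_captured, (Prel_mono (S j')); auto.
      - apply (Srel_mono k); auto; lia. }
    apply (proj2 (HE j' (le_n _)) N0 N1 EHole EHole); [|apply Prel_hole].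
    apply (Krel_mono (S j')); auto.
Qed.

Lemma Orel_refl t : Orel t t.
Proof. induction t; auto using Orel_var, Orel_lam, Orel_app, Orel_shift, Orel_reset. Qed.

Lemma Orel_cplug C t0 t1 : Orel t0 t1 -> Orel (cplug C t0) (cplug C t1).
Proof.
  induction C; intros; simpl; auto using Orel_lam, Orel_app, Orel_shift, Orel_reset, Orel_refl.
Qed.

(** * Soundness of normal form simulations *)

Definition Grel (j : nat) (G0 G1 : ectx) : Prop :=
  forall i w0 w1, i <= j -> Vrel i w0 w1 -> Erel i (plug G0 w0) (plug G1 w1).

Definition Crel (j : nat) (C0 C1 : ectx) : Prop :=
  ectx_ok C0 /\ ectx_ok C1 /\
  forall i X0 X1, i <= j -> Erel i X0 X1 -> obs i (plug C0 X0) (plug C1 X1).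

Lemma Frel_ecomp j F0 F1 G0 G1 : Frel j F0 F1 -> Grel j G0 G1 -> ectx_pure G0 -> ectx_pure G1 ->
  Frel j (ecomp F0 G0) (ecomp F1 G1).
Proof.
  intros [HF0 [HF1 HF]] HG HG0 HG1.
  split; [apply ectx_pure_ecomp; auto|]; split; [apply ectx_pure_ecomp; auto|].
  intros i w0 w1 Hi Hw; rewrite !plug_ecomp.
  apply (HG i w0 w1 Hi Hw i (le_n _)); split; auto; split; auto; intros; apply HF; auto; lia.
Qed.

Lemma Prel_ecomp j F0 F1 G0 G1 : Prel j F0 F1 -> Grel j G0 G1 -> ectx_pure G0 -> ectx_pure G1 ->
  Prel j (ecomp F0 G0) (ecomp F1 G1).
Proof.
  intros [HF0 [HF1 HP]] HG HG0 HG1.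
  split; [apply ectx_pure_ecomp; auto|]; split; [apply ectx_pure_ecomp; auto|].
  intros i w0 w1 Hi Hw i' N0 N1 Hi' HN; rewrite !plug_ecomp.
  apply (HG i w0 w1 Hi Hw i' Hi'); auto; split; auto; split; auto; intros; apply HP; auto; lia.
Qed.

Lemma Erel_plug_pure j t0 t1 G0 G1 : Erel j t0 t1 -> Grel j G0 G1 ->
  ectx_pure G0 -> ectx_pure G1 -> Erel j (plug G0 t0) (plug G1 t1).
Proof.
  intros H HG HG0 HG1 j' Hj'; split.
  - intros F0 F1 HF; rewrite <- !plug_ecomp; apply (H j' Hj'), Frel_ecomp; auto.
    intros i w0 w1 Hi Hw; apply HG; auto; lia.
  - intros N0 N1 F0 F1 HN HP; rewrite <- !plug_ecomp; apply (H j' Hj'); auto.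
    apply Prel_ecomp; auto; intros i w0 w1 Hi Hw; apply HG; auto; lia.
Qed.

Lemma Crel_Frel j F0 F1 : Frel j F0 F1 -> Crel j F0 F1.
Proof.
  intros HF; destruct (Frel_Krel _ _ _ HF) as [HF0 [HF1 _]]; split; auto; split; auto.
  intros i X0 X1 Hi HX; apply (HX i (le_n _)), (Frel_mono j); auto.
Qed.

Lemma Crel_delim j N0 N1 F0 F1 : Krel j N0 N1 -> Prel j F0 F1 ->
  Crel j (ecomp N0 (EReset F0)) (ecomp N1 (EReset F1)).
Proof.
  intros HN HP; destruct (Krel_ecomp_reset _ _ _ _ _ HN HP) as [HC0 [HC1 _]].
  split; auto; split; auto; intros i X0 X1 Hi HX; rewrite !plug_ecomp_reset.
  apply (HX i (le_n _)); [apply (Krel_mono j) | apply (Prel_mono j)]; auto.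
Qed.

Lemma Krel_ecomp_Erel j C0 C1 G0 G1 : Crel j C0 C1 -> Grel j G0 G1 ->
  ectx_ok G0 -> ectx_ok G1 -> Krel j (ecomp C0 G0) (ecomp C1 G1).
Proof.
  intros [HC0 [HC1 HC]] HG HG0 HG1; split; [apply ectx_ok_ecomp; auto|].
  split; [apply ectx_ok_ecomp; auto|].
  intros i w0 w1 Hi Hw; rewrite !plug_ecomp; apply HC; auto.
Qed.

Lemma Krel_ecomp_Rrel j N0 N1 G0 G1 : Krel j N0 N1 ->
  (forall i w0 w1, i <= j -> Vrel i w0 w1 -> Rrel i (plug G0 w0) (plug G1 w1)) ->
  ectx_ok G0 -> ectx_ok G1 -> Krel j (ecomp N0 G0) (ecomp N1 G1).
Proof.
  intros [HN0 [HN1 HN]] HG HG0 HG1; split; [apply ectx_ok_ecomp; auto|].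
  split; [apply ectx_ok_ecomp; auto|].
  intros i w0 w1 Hi Hw; rewrite !plug_ecomp; apply (HG i); auto.
  split; auto; split; auto; intros; apply HN; auto; lia.
Qed.

(* By excluded middle on whether [u] reduces: reductions of [u] are reductions
   of [C[s u]]. *)
Lemma nsteps_plug_subst_irreducible i C s u n : ectx_ok C -> vsubst s ->
  nsteps i (plug C (subst s u)) n -> irreducible n ->
  exists m u', m <= i /\ nsteps m u u' /\ irreducible u'.
Proof.
  revert u; induction i as [|i IH]; intros u HC Hs Hn Hirr;
    (destruct (classic (exists u', sstep u u')) as [[u' Hu'] | Hno];
     [| exists 0, u; split; [lia|]; split; [constructor|];
        apply irreducible_sstep; intros u' Hu'; apply Hno; eauto]);
    assert (Hst : sstep (plug C (subst s u)) (plug C (subst s u')))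
      by (apply sstep_plug, sstep_subst; auto).
  - inversion Hn; subst; exfalso; eapply (proj1 (irreducible_sstep _) Hirr); eauto.
  - inversion Hn as [|i' t v w Hs1 Hn']; subst.
    rewrite (sstep_deterministic _ _ _ Hs1 Hst) in Hn'.
    destruct (IH u' HC Hs Hn' Hirr) as [m [u'' [Hm [Hu'' Hirr'']]]].
    exists (S m), u''; split; [lia|]; split; auto; econstructor; eauto.
Qed.

Definition delimited (u : term) : Prop := is_val u \/ exists a, u = Reset a.

Lemma delimited_nsteps n u u' : delimited u -> nsteps n u u' -> delimited u'.
Proof.
  intros Hu Hs; induction Hs as [|n t u w Htu _ IH]; auto; apply IH.
  destruct Hu as [Hv | [a ->]]; [exfalso; eapply val_irreducible; eauto|].
  inversion Htu; subst; unfold delimited; eauto.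
Qed.

Lemma pure_not_delimited F t : ectx_pure F -> ~ is_val t -> (forall a, t <> Reset a) ->
  ~ delimited (plug F t).
Proof.
  intros [HF HF'] Hv Hr [H | [a H]]; destruct F; simpl in *; try contradiction.
  - eapply Hr; eauto.
  - discriminate.
  - discriminate.
Qed.

Lemma delimited_outer_plug_fresh E G x w :
  delimited (plug (ecomp E (EReset G)) (App (Var x) w)) -> delimited (plug_fresh E).
Proof.
  intros H; destruct E; simpl in *.
  - left; simpl; auto.
  - destruct H as [H | [a H]]; [contradiction | discriminate].
  - destruct H as [H | [a H]]; [contradiction | discriminate].
  - right; eexists; reflexivity.
Qed.

Lemma ectx_rel_pure_inv (R : term -> term -> Prop) F0 F1 : ectx_pure F0 -> ectx_rel R F0 F1 ->
  ectx_pure F1 /\ R (plug_fresh F0) (plug_fresh F1).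
Proof.
  intros HF [[E0' [G0 [E1' [G1 H]]]] | H]; [|tauto].
  exfalso; destruct H as [_ [_ [_ [_ [-> _]]]]]; eapply ecomp_reset_not_pure; eauto.
Qed.

Lemma nf_rel_val_inv (R : term -> term -> Prop) v n : nf_rel R v n -> is_val v ->
  is_val n /\ R (app_fresh v) (app_fresh n).
Proof.
  intros H Hv; destruct H; auto; exfalso;
  [eapply plug_shift_not_val | eapply plug_app_not_val]; eauto.
Qed.

Lemma nf_rel_var_app_inv (R : term -> term -> Prop) z e : nf_rel R (App (Var z) (Var 0)) e ->
  exists E1 w1, e = plug E1 (App (Var z) w1) /\ ectx_pure E1 /\ R (Var 0) (plug_fresh E1) /\
    is_val w1 /\ R (app_fresh (Var 0)) (app_fresh w1).
Proof.
  intros H; remember (App (Var z) (Var 0)) as a eqn:Ha.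
  destruct H as [v0 v1 Hv0 _ _ | F0 F1 t0 t1 _ _ _ _ | E0 E1 x v0 v1 HE0 HE1 Hv0 Hv1 HRE HRv].
  - rewrite Ha in Hv0; simpl in Hv0; contradiction.
  - exfalso; destruct F0; simpl in Ha; try discriminate; injection Ha; intros;
    eapply plug_shift_not_var; eauto.
  - destruct E0; simpl in Ha; try discriminate; injection Ha; intros; subst;
      try solve [exfalso; eapply plug_app_not_var; eauto].
    destruct (nf_rel_val_inv _ _ _ HRv Hv0) as [_ Hr].
    destruct HRE as [[E0' [G0 [E1' [G1 [_ [_ [_ [_ [Heq _]]]]]]]]] | [_ [HE1' Hr1]]].
    + destruct E0'; discriminate.
    + exists E1, v1; repeat split; auto; apply HE1'.
Qed.

Lemma app_subst_nsteps s v p : vsubst s -> is_val v -> is_val p ->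
  exists n, nsteps n (App (subst s v) p) (subst (scons p s) (app_fresh v)).
Proof.
  intros Hs Hv Hp; destruct v; simpl in Hv; try contradiction.
  - exists 0; constructor.
  - exists 1; simpl; rewrite <- subst1_up; apply nsteps_one, ss_beta; auto.
Qed.

Section Simulation.
Variable R : term -> term -> Prop.

Definition Esound (k : nat) : Prop :=
  forall u0 u1 s0 s1, R u0 u1 -> Srel k s0 s1 -> Erel k (subst s0 u0) (subst s1 u1).

Definition Rsound (k : nat) : Prop :=
  forall u0 u1 s0 s1, R u0 u1 -> delimited u0 -> Srel k s0 s1 ->
    Rrel k (subst s0 u0) (subst s1 u1).

Definition Vsound (k : nat) : Prop :=
  forall v0 v1 s0 s1, is_val v0 -> is_val v1 -> R (app_fresh v0) (app_fresh v1) ->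
    Srel k s0 s1 -> Vrel k (subst s0 v0) (subst s1 v1).

Lemma Grel_Esound j E0 E1 s0 s1 : (forall i, i <= j -> Esound i) ->
  R (plug_fresh E0) (plug_fresh E1) -> Srel j s0 s1 -> Grel j (esubst s0 E0) (esubst s1 E1).
Proof.
  intros HE HRE Hs i w0 w1 Hi Hw; rewrite <- !subst_scons_plug_fresh.
  apply HE; auto; apply Srel_scons; auto; apply (Srel_mono j); auto.
Qed.

Lemma Rrel_plug_Rsound j E0 E1 s0 s1 : (forall i, i <= j -> Rsound i) ->
  R (plug_fresh E0) (plug_fresh E1) -> delimited (plug_fresh E0) -> Srel j s0 s1 ->
  forall i w0 w1, i <= j -> Vrel i w0 w1 -> Rrel i (plug (esubst s0 E0) w0) (plug (esubst s1 E1) w1).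
Proof.
  intros HRs HRE Hd Hs i w0 w1 Hi Hw; rewrite <- !subst_scons_plug_fresh.
  apply HRs; auto; apply Srel_scons; auto; apply (Srel_mono j); auto.
Qed.

Lemma Prel_Rsound j G0 G1 s0 s1 : (forall i, i <= j -> Rsound i) ->
  ectx_pure G0 -> ectx_pure G1 -> R (Reset (plug_fresh G0)) (Reset (plug_fresh G1)) ->
  Srel j s0 s1 -> Prel j (esubst s0 G0) (esubst s1 G1).
Proof.
  intros HRs HG0 HG1 HRG Hs; destruct (Srel_vsubst _ _ _ Hs) as [Hs0 Hs1].
  split; [apply ectx_pure_esubst; auto|]; split; [apply ectx_pure_esubst; auto|].
  intros i w0 w1 Hi Hw; rewrite <- !subst_scons_plug_fresh.
  change (Rrel i (subst (scons w0 s0) (Reset (plug_fresh G0)))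
                 (subst (scons w1 s1) (Reset (plug_fresh G1)))).
  apply HRs; auto; [right; eauto|]; apply Srel_scons; auto; apply (Srel_mono j); auto.
Qed.

(* Continuations in which [R]-related terms closed by [s0], [s1] are
   observationally related: one field per kind of normal form reachable from
   terms satisfying [P]. *)
Record adequate (P : term -> Prop) (s0 s1 : nat -> term) (l : nat) (C0 C1 : ectx) : Prop := {
  adequate_ok0 : ectx_ok C0;
  adequate_ok1 : ectx_ok C1;
  adequate_val : forall i w0 w1, i <= l -> Vrel i w0 w1 -> obs i (plug C0 w0) (plug C1 w1);
  adequate_control : forall G0 G1 c0 c1, ectx_pure G0 -> ectx_pure G1 ->
    R (plug_fresh G0) (plug_fresh G1) -> R (Reset c0) (Reset c1) -> P (plug G0 (Shift c0)) ->
    obs l (plug C0 (subst s0 (plug G0 (Shift c0)))) (plug C1 (subst s1 (plug G1 (Shift c1))));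
  adequate_open_pure : forall E0 E1 x w0 l', l' < l -> ectx_pure E0 -> ectx_pure E1 ->
    R (plug_fresh E0) (plug_fresh E1) -> P (plug E0 (App (Var x) w0)) ->
    Crel l' (ecomp C0 (esubst s0 E0)) (ecomp C1 (esubst s1 E1));
  adequate_open_delim : forall E0 E1 G0 x w0 l', l' < l -> ectx_ok E0 -> ectx_ok E1 ->
    R (plug_fresh E0) (plug_fresh E1) -> P (plug (ecomp E0 (EReset G0)) (App (Var x) w0)) ->
    Krel l' (ecomp C0 (esubst s0 E0)) (ecomp C1 (esubst s1 E1)) }.

Lemma adequate_mono P s0 s1 l l' C0 C1 : l' <= l ->
  adequate P s0 s1 l C0 C1 -> adequate P s0 s1 l' C0 C1.
Proof.
  intros Hl [H0 H1 Hv Hc Hp Hd]; constructor; auto.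
  - intros; apply Hv; auto; lia.
  - intros; apply (obs_mono l); auto.
  - intros; eapply Hp; eauto; lia.
  - intros; eapply Hd; eauto; lia.
Qed.

Lemma obs_adequate_open P s0 s1 l C0 C1 E0 E1 x v0 v1 :
  (forall j, j < l -> Rsound j) -> (forall j, j < l -> Vsound j) -> Srel l s0 s1 ->
  adequate P s0 s1 l C0 C1 -> P (plug E0 (App (Var x) v0)) ->
  ectx_eval E0 -> ectx_eval E1 -> is_val v0 -> is_val v1 ->
  ectx_rel R E0 E1 -> nf_rel R v0 v1 ->
  obs l (plug C0 (subst s0 (plug E0 (App (Var x) v0))))
        (plug C1 (subst s1 (plug E1 (App (Var x) v1)))).
Proof.
  intros HRs HVs Hs HC HP HE0 HE1 Hv0 Hv1 HRE HRv.
  destruct (Srel_vsubst _ _ _ Hs) as [Hs0 Hs1].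
  pose proof (adequate_ok0 _ _ _ _ _ _ HC) as HC0.
  assert (HE0s : ectx_ok (esubst s0 E0)) by (apply ectx_ok_esubst; auto).
  rewrite !plug_subst; simpl.
  pose proof (Hs x) as Hx; destruct (Vrel_val _ _ _ Hx) as [Hx0 _].
  destruct (s0 x) as [z | a | | |]; simpl in Hx0; try contradiction.
  { rewrite <- plug_ecomp; apply obs_open; [apply ectx_ok_ecomp | apply is_val_subst]; auto. }
  apply (obs_sstep_l _ (plug C0 (plug (esubst s0 E0) (subst1 (subst s0 v0) a)))).
  { apply sstep_plug, sstep_plug, ss_beta; auto; apply is_val_subst; auto. }
  intros l' ->.
  assert (Hw : Vrel l' (subst s0 v0) (subst s1 v1)).
  { apply HVs; auto; [apply nf_rel_val_inv; auto | apply (Srel_mono (S l')); auto]. }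
  apply Vrel_unfold in Hx; destruct Hx as [_ [_ Hx]].
  assert (HEa : Erel l' (subst1 (subst s0 v0) a) (App (s1 x) (subst s1 v1))) by (apply Hx; auto).
  destruct HRE as [[E0' [G0 [E1' [G1 [HE0' [HG0 [HE1' [HG1 [-> [-> [HRE' HRG]]]]]]]]]]]
                  | [HE0p [HE1p HRE]]].
  - assert (HK : Krel l' (ecomp C0 (esubst s0 E0')) (ecomp C1 (esubst s1 E1')))
      by (eapply adequate_open_delim; eauto).
    assert (HPr : Prel l' (esubst s0 G0) (esubst s1 G1)).
    { apply Prel_Rsound; auto; [intros; apply HRs; lia | apply (Srel_mono (S l')); auto]. }
    destruct (Crel_delim _ _ _ _ _ HK HPr) as [_ [_ HCr]].
    generalize (HCr l' _ _ (le_n _) HEa).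
    rewrite !esubst_ecomp, !plug_ecomp; simpl; rewrite ?plug_ecomp; auto.
  - destruct (adequate_open_pure _ _ _ _ _ _ HC E0 E1 x v0 l') as [_ [_ HCr]]; auto.
    generalize (HCr l' _ _ (le_n _) HEa); rewrite !plug_ecomp; auto.
Qed.

Lemma obs_adequate_nf P s0 s1 l C0 C1 m0 m1 :
  (forall j, j < l -> Rsound j) -> (forall j, j <= l -> Vsound j) -> Srel l s0 s1 ->
  adequate P s0 s1 l C0 C1 -> P m0 -> nf_rel R m0 m1 ->
  obs l (plug C0 (subst s0 m0)) (plug C1 (subst s1 m1)).
Proof.
  intros HRs HVs Hs HC HP Hnf.
  destruct Hnf as [v0 v1 Hv0 Hv1 Hrv | F0 F1 t0 t1 HF0 HF1 Hctx Hrr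
                  | E0 E1 x v0 v1 HE0 HE1 Hv0 Hv1 Hctx Hnfv].
  - apply (adequate_val _ _ _ _ _ _ HC); auto; apply HVs; auto.
  - destruct (ectx_rel_pure_inv R F0 F1) as [_ Hr]; auto.
    apply (adequate_control _ _ _ _ _ _ HC); auto.
  - apply (obs_adequate_open P); auto; intros; apply HVs; lia.
Qed.

Hypothesis HR : nf_simulation R.

Lemma obs_adequate P s0 s1 l C0 C1 u0 u1 :
  (forall n u u', P u -> nsteps n u u' -> P u') ->
  (forall j, j < l -> Rsound j) -> (forall j, j <= l -> Vsound j) -> Srel l s0 s1 ->
  adequate P s0 s1 l C0 C1 -> R u0 u1 -> P u0 ->
  obs l (plug C0 (subst s0 u0)) (plug C1 (subst s1 u1)).
Proof.
  intros HPst HRs HVs Hs HC HRu HPu i n0 Hi Hst Hn0.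
  destruct (Srel_vsubst _ _ _ Hs) as [Hs0 Hs1].
  pose proof (adequate_ok0 _ _ _ _ _ _ HC) as HC0; pose proof (adequate_ok1 _ _ _ _ _ _ HC) as HC1.
  destruct (nsteps_plug_subst_irreducible _ _ _ _ _ HC0 Hs0 Hst (observable_irreducible _ Hn0))
    as [m [u0' [Hm [Hu0 Hirr0]]]].
  destruct (HR _ _ HRu u0' (conj (nsteps_steps _ _ _ Hu0) Hirr0)) as [u1' [[Hu1 _] Hnf]].
  apply steps_iff_nsteps in Hu1; destruct Hu1 as [m' Hu1].
  enough (HO : obs l (plug C0 (subst s0 u0)) (plug C1 (subst s1 u1))) by exact (HO i n0 Hi Hst Hn0).
  apply (obs_nsteps_l m _ (plug C0 (subst s0 u0'))); [apply nsteps_plug, nsteps_subst; auto|].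
  intros Hml; apply (obs_nsteps_r m' _ _ (plug C1 (subst s1 u1'))).
  { apply nsteps_plug, nsteps_subst; auto. }
  apply (obs_adequate_nf P); eauto.
  - intros; apply HRs; lia.
  - intros; apply HVs; lia.
  - apply (Srel_mono l); auto; lia.
  - apply (adequate_mono _ _ _ l); auto; lia.
Qed.

Lemma adequate_Frel j s0 s1 F0 F1 : (forall i, i < j -> Esound i) -> Srel j s0 s1 ->
  Frel j F0 F1 -> adequate (fun _ => True) s0 s1 j F0 F1.
Proof.
  intros HEs Hs HF; destruct (Srel_vsubst _ _ _ Hs) as [Hs0 Hs1].
  pose proof HF as [HF0 [HF1 HFv]].
  assert (HG : forall E0 E1 l', l' < j -> R (plug_fresh E0) (plug_fresh E1) ->
            Grel l' (esubst s0 E0) (esubst s1 E1)).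
  { intros E0 E1 l' Hl' HRE; apply Grel_Esound; auto; [intros; apply HEs; lia|].
    apply (Srel_mono j); auto; lia. }
  constructor; auto; [apply HF0 | apply HF1 | ..].
  - intros G0 G1 c0 c1 HG0 HG1 _ _ _; rewrite !plug_subst, <- !plug_ecomp; simpl.
    apply obs_control_stuck; eexists; eexists; (split; [|reflexivity]);
      apply ectx_pure_ecomp; auto; apply ectx_pure_esubst; auto.
  - intros E0 E1 x w0 l' Hl' HE0 HE1 HRE _; apply Crel_Frel, Frel_ecomp; auto;
      [apply (Frel_mono j); auto; lia | apply ectx_pure_esubst; auto ..].
  - intros E0 E1 G0 x w0 l' Hl' HE0 HE1 HRE _; apply Krel_ecomp_Erel; auto;
      [apply Crel_Frel, (Frel_mono j); auto; lia | apply ectx_ok_esubst; auto ..].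
Qed.

(* A control-stuck term in [N[<F[ ]>]] captures [F] and continues with the
   body of the shift under a reset, to which [Rsound] applies. *)
Lemma adequate_delim j s0 s1 N0 N1 F0 F1 :
  (forall i, i < j -> Esound i) -> (forall i, i < j -> Rsound i) -> Srel j s0 s1 ->
  Krel j N0 N1 -> Prel j F0 F1 ->
  adequate (fun _ => True) s0 s1 j (ecomp N0 (EReset F0)) (ecomp N1 (EReset F1)).
Proof.
  intros HEs HRs Hs HN HP; destruct (Srel_vsubst _ _ _ Hs) as [Hs0 Hs1].
  pose proof (Krel_ecomp_reset _ _ _ _ _ HN HP) as [HC0 [HC1 HCv]].
  pose proof HP as [HF0 [HF1 _]]; pose proof HN as [HN0 [HN1 _]].
  assert (HG : forall E0 E1 l', l' < j -> R (plug_fresh E0) (plug_fresh E1) ->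
            Grel l' (esubst s0 E0) (esubst s1 E1)).
  { intros E0 E1 l' Hl' HRE; apply Grel_Esound; auto; [intros; apply HEs; lia|].
    apply (Srel_mono j); auto; lia. }
  constructor; auto.
  - intros G0 G1 c0 c1 HG0 HG1 HRG HRc _.
    rewrite !plug_ecomp_reset, !plug_subst; simpl; rewrite <- !plug_ecomp.
    assert (HFG0 : ectx_pure (ecomp F0 (esubst s0 G0)))
      by (apply ectx_pure_ecomp; auto; apply ectx_pure_esubst; auto).
    assert (HFG1 : ectx_pure (ecomp F1 (esubst s1 G1)))
      by (apply ectx_pure_ecomp; auto; apply ectx_pure_esubst; auto).
    apply obs_sstep_l with (1 := sstep_plug _ _ _ HN0 (ss_shift _ _ HFG0)).
    intros l ->.
    eapply obs_nsteps_r; [apply nsteps_one, sstep_plug, ss_shift; auto|].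
    rewrite !subst1_up.
    assert (HRr : Rrel l (subst (scons (captured (ecomp F0 (esubst s0 G0))) s0) (Reset c0))
                         (subst (scons (captured (ecomp F1 (esubst s1 G1))) s1) (Reset c1))).
    { apply (HRs l (Nat.lt_succ_diag_r l)); [auto | right; eauto |].
      apply Srel_scons; [|apply (Srel_mono (S l)); auto].
      apply Vrel_captured, Prel_ecomp; try (apply ectx_pure_esubst; auto).
      - apply (Prel_mono (S l)); auto.
      - apply HG; auto; lia. }
    apply HRr; auto; apply (Krel_mono (S l)); auto.
  - intros E0 E1 x w0 l' Hl' HE0 HE1 HRE _; rewrite !ecomp_assoc; simpl.
    apply Crel_delim; [apply (Krel_mono j); auto; lia|].
    apply Prel_ecomp; [apply (Prel_mono j); auto; lia | auto | apply ectx_pure_esubst; auto ..].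
  - intros E0 E1 G0 x w0 l' Hl' HE0 HE1 HRE _; apply Krel_ecomp_Erel; auto;
      [| apply ectx_ok_esubst; auto ..].
    apply Crel_delim; [apply (Krel_mono j) | apply (Prel_mono j)]; auto; lia.
Qed.

Lemma adequate_Krel j s0 s1 N0 N1 : (forall i, i < j -> Rsound i) -> Srel j s0 s1 ->
  Krel j N0 N1 -> adequate delimited s0 s1 j N0 N1.
Proof.
  intros HRs Hs HN; destruct (Srel_vsubst _ _ _ Hs) as [Hs0 Hs1].
  pose proof HN as [HN0 [HN1 HNv]].
  constructor; auto.
  - intros G0 G1 c0 c1 HG0 _ _ _ Hd; exfalso.
    apply (pure_not_delimited _ _ HG0 (plug_shift_not_val EHole c0)) in Hd; auto; discriminate.
  - intros E0 E1 x w0 l' _ HE0 _ _ Hd; exfalso.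
    apply (pure_not_delimited _ _ HE0 (plug_app_not_val EHole (Var x) w0)) in Hd; auto; discriminate.
  - intros E0 E1 G0 x w0 l' Hl' HE0 HE1 HRE Hd.
    apply Krel_ecomp_Rrel; [apply (Krel_mono j); auto; lia | | apply ectx_ok_esubst; auto ..].
    apply Rrel_plug_Rsound; [intros; apply HRs; lia | auto | | apply (Srel_mono j); auto; lia].
    eapply delimited_outer_plug_fresh; eauto.
Qed.


Lemma Esound_step k : (forall j, j < k -> Esound j) -> (forall j, j < k -> Rsound j) ->
  (forall j, j <= k -> Vsound j) -> Esound k.
Proof.
  intros HEs HRs HVs u0 u1 s0 s1 HRu Hs j Hj; apply (Srel_mono _ j) in Hs; auto.
  assert (HEs' : forall i, i < j -> Esound i) by (intros; apply HEs; lia).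
  assert (HRs' : forall i, i < j -> Rsound i) by (intros; apply HRs; lia).
  assert (HVs' : forall i, i <= j -> Vsound i) by (intros; apply HVs; lia).
  split.
  - intros F0 F1 HF; apply (obs_adequate (fun _ => True)); auto using adequate_Frel.
  - intros N0 N1 F0 F1 HN HP; rewrite <- !plug_ecomp_reset.
    apply (obs_adequate (fun _ => True)); auto using adequate_delim.
Qed.

Lemma Rsound_step k : (forall j, j < k -> Rsound j) -> (forall j, j <= k -> Vsound j) -> Rsound k.
Proof.
  intros HRs HVs u0 u1 s0 s1 HRu Hd Hs j N0 N1 Hj HN; apply (Srel_mono _ j) in Hs; auto.
  apply (obs_adequate delimited); eauto using delimited_nsteps.
  - intros; apply HRs; lia.
  - intros; apply HVs; lia.
  - apply adequate_Krel; auto; intros; apply HRs; lia.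
Qed.

(* The value [y] is related to [v1] through the open-stuck term [y x], so the
   simulation makes [v1 x] evaluate to some [E1[y w1]] with [x] related to
   [w1] and [E1] related to the empty context. *)
Lemma Erel_eta k j y v1 p0 p1 s0 s1 : j < k -> (forall i, i <= j -> Esound i) -> Vsound j ->
  R (App (Var (S y)) (Var 0)) (app_fresh v1) -> Srel k s0 s1 -> Vrel j p0 p1 ->
  Erel j (reduct (s0 y) p0) (subst (scons p1 s1) (app_fresh v1)).
Proof.
  intros Hj HEs HVs HRv Hs Hp.
  destruct (Srel_vsubst _ _ _ Hs) as [Hs0 Hs1]; destruct (Vrel_val _ _ _ Hp) as [Hp0 Hp1].
  assert (Hs' : Srel j (scons p0 s0) (scons p1 s1))
    by (apply Srel_scons; auto; apply (Srel_mono k); auto; lia).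
  assert (Hirr : irreducible (App (Var (S y)) (Var 0)))
    by (apply irreducible_sstep, (open_irreducible EHole); simpl; auto).
  destruct (HR _ _ HRv _ (conj (rt_refl _ _ _) Hirr)) as [e1 [[He1 _] Hnf]].
  destruct (nf_rel_var_app_inv _ _ _ Hnf) as [E1 [w1 [-> [HE1 [HRE1 [Hw1 HRw1]]]]]].
  apply steps_iff_nsteps in He1; destruct He1 as [n He1].
  apply (Erel_nsteps_r _ _ _ _ _ (nsteps_subst _ _ _ _ (vsubst_scons _ _ Hp1 Hs1) He1)).
  rewrite plug_subst; simpl.
  assert (Hw : Vrel j p0 (subst (scons p1 s1) w1)).
  { change p0 with (subst (scons p0 s0) (Var 0)); apply HVs; simpl; auto. }
  pose proof (Hs y) as Hy; apply Vrel_unfold in Hy; destruct Hy as [_ [_ Hy]].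
  change (reduct (s0 y) p0) with (plug EHole (reduct (s0 y) p0)).
  apply Erel_plug_pure; [apply Hy; auto | | split; simpl; auto | apply ectx_pure_esubst; auto].
  - intros i w0' w1' Hi Hw'; simpl.
    change w0' with (subst (scons w0' (scons p0 s0)) (Var 0)); rewrite <- subst_scons_plug_fresh.
    apply HEs; auto; apply Srel_scons; auto; apply (Srel_mono j); auto.
  - apply vsubst_scons; auto.
Qed.

Lemma Vsound_all k : (forall j, j < k -> Esound j) -> Vsound k.
Proof.
  induction k as [k IH] using (well_founded_induction lt_wf).
  intros HEs v0 v1 s0 s1 Hv0 Hv1 HRv Hs; destruct (Srel_vsubst _ _ _ Hs) as [Hs0 Hs1].
  apply Vrel_unfold; split; [apply is_val_subst; auto|]; split; [apply is_val_subst; auto|].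
  intros j p0 p1 Hj Hp; destruct (Vrel_val _ _ _ Hp) as [Hp0 Hp1].
  destruct (app_subst_nsteps s1 v1 p1 Hs1 Hv1 Hp1) as [n Hn].
  apply (Erel_nsteps_r _ _ _ _ _ Hn).
  destruct v0 as [y | a0 | | |]; simpl in Hv0; try contradiction.
  - change (subst s0 (Var y)) with (s0 y); apply (Erel_eta k); auto; [intros; apply HEs; lia|].
    apply IH; auto; intros; apply HEs; lia.
  - change (reduct (subst s0 (Lam a0)) p0) with (subst1 p0 (subst (up s0) a0)).
    rewrite subst1_up; apply HEs; auto.
    apply Srel_scons; auto; apply (Srel_mono k); auto; lia.
Qed.

Lemma sound_all k : Esound k /\ Rsound k.
Proof.
  induction k as [k IH] using (well_founded_induction lt_wf).
  assert (HVs : forall j, j <= k -> Vsound j)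
    by (intros; apply Vsound_all; intros; apply IH; lia).
  split; [apply Esound_step | apply Rsound_step]; auto; intros; apply IH; auto.
Qed.

End Simulation.

Lemma Vrel_var k n : Vrel k (Var n) (Var n).
Proof.
  apply Vrel_unfold; split; [simpl; auto|]; split; [simpl; auto|].
  intros j p0 p1 Hj Hp; destruct (Vrel_val _ _ _ Hp) as [Hp0 Hp1]; simpl.
  intros j' Hj'; split.
  - intros F0 F1 [[HF0 _] _]; apply obs_open; auto.
  - intros N0 N1 F0 F1 [HN0 _] [[HF0 _] _]; rewrite <- plug_ecomp_reset.
    apply obs_open; auto; apply ectx_ok_ecomp; simpl; auto.
Qed.

Lemma ctx_approx_nf_simulation R t0 t1 : nf_simulation R -> R t0 t1 -> ctx_approx t0 t1.
Proof.
  intros HR HRt C _ _.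
  assert (HO : forall k, obs k (cplug C t0) (cplug C t1)).
  { intros k.
    assert (HE : Erel k (subst Var (cplug C t0)) (subst Var (cplug C t1))).
    { apply Orel_cplug; [intros k' s0 s1 Hs; apply (sound_all R HR k'); auto | intro; apply Vrel_var]. }
    rewrite !subst_id in HE; exact (proj1 (HE k (le_n k)) EHole EHole (Frel_hole k)). }
  split; intros [v0 [[Hst _] Hv0]]; apply steps_iff_nsteps in Hst; destruct Hst as [i Hi];
    destruct (HO i i v0 (le_n _) Hi ltac:(unfold observable; auto)) as [v1 [Hv1 [Hval Hcs]]];
    exists v1; auto.
Qed.

Theorem theorem1 : forall t0 t1 : term, nf_bisim t0 t1 -> ctx_equiv t0 t1.
Proof.
  intros t0 t1 [R [[HR HRinv] HRt]]; split.
  - apply (ctx_approx_nf_simulation R); auto.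
  - apply (ctx_approx_nf_simulation (fun a b => R b a)); auto.
Qed.
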